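(* Let $(\Omega,T)$ be a minimal subshift over a finite alphabet $A$ such that no word in $L_5(\Omega)$ has repeated letters. Then: (1) For every $v\in L(\Omega)$ and $i\in\mathbb Z$, the sets $(v,i),(v,i+1),(v,i+2)$ are pairwise disjoint; in particular $\sigma_{(v,i)}$ is well defined. (2) If $U$ is a clopen set such that $U,TU,T^2U$ are pairwise disjoint, then for every finite clopen partition $\mathcal C$ of $U$ we have $\sigma_U=\prod_{D\in\mathcal C}\sigma_D$, and the elements $\sigma_D$, $D\in\mathcal C$, pairwise commute. In particular, for $a,b,c\in A$, $\sigma_{[a.]}=\prod_{b,c\in A}\sigma_{[a.bc]}$ and $\sigma_{[.bc]}=\prod_{a\in A}\sigma_{[a.bc]}$. (3) For every $w=w_0\cdots w_{n-1}\in A^n$ with $n\geq 4$, $$\sigma_{[w_0|w_1\cdots w_{n-1}]}=\sigma_{[.w_0w_1]}\ast\Big(\sigma_{[.w_1w_2]}\ast\cdots\ast\big(\sigma_{[.w_{n-4}w_{n-3}]}\ast\sigma_{[w_{n-3}|w_{n-2}w_{n-1}]}\big)\cdots\Big).$$ (4) For every $w=w_0\cdots w_{n-1}\in A^n$ with $n\geq4$ and every $2\leq k\leq n-1$, $$\sigma_{[w_0\cdots w_{k-1}|w_k\cdots w_{n-1}]}=\Big(\cdots\big((\sigma_{[w_0|w_1\cdots w_{n-1}]}\ast\sigma_{[w_2.]})\ast\sigma_{[w_3.]}\big)\ast\cdots\ast\sigma_{[w_k.]}\Big).$$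
   Context: $T$ is the left shift $(T\omega)_m=\omega_{m+1}$ on $A^{\mathbb Z}$; a minimal subshift is a closed shift-invariant $\Omega\subseteq A^{\mathbb Z}$ with every orbit dense. Words are indexed from $0$; $L_m(\Omega)$ is the set of words of length $m$ occurring in sequences of $\Omega$, $L(\Omega)=\bigcup_mL_m(\Omega)$. For words $u,v$ over $A$ (either may be empty), $[u.v]=[u|v]=\{\omega\in\Omega:\ \omega_{-i}=u_{|u|-i}\ (1\leq i\leq|u|),\ \omega_i=v_i\ (0\leq i\leq|v|-1)\}$ (possibly empty). For a word $v$ and $i\in\mathbb Z$, $(v,i)=T^i[.v]$. For a clopen set $U$ with $U,TU,T^2U$ pairwise disjoint, $\sigma_U:\Omega\to\Omega$ is defined by $\sigma_U(\omega)=T\omega$ for $\omega\in U\cup TU$, $\sigma_U(\omega)=T^{-2}\omega$ for $\omega\in T^2U$, and $\sigma_U(\omega)=\omega$ otherwise; in particular $\sigma_\emptyset$ is the identity. We write $\sigma_{(v,i)}=\sigma_{T^i[.v]}$. These are elements of the group of homeomorphisms of $\Omega$. For group elements $r,s$, $r\ast s:=s\,r^{-1}s^{-1}r$ (a non-associative operation). *)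

From Stdlib Require Import ZArith ClassicalDescription.
From mathcomp Require Import all_boot.
Set Implicit Arguments. Unset Strict Implicit. Unset Printing Implicit Defensive.

Section SubshiftDefs.
Variable A : finType.

Definition config := Z -> A.
Definition cset := config -> Prop.

(* T^k : (T^k w)_m = w_(m+k); T = shiftn 1 is the left shift *)
Definition shiftn (k : Z) (w : config) : config := fun m => w (m + k)%Z.

(* T^k U = { T^k w | w in U } *)
Definition shiftset (k : Z) (U : cset) : cset := fun w => U (shiftn (- k) w).

Definition disj (U V : cset) : Prop := forall w, ~ (U w /\ V w).

Definition agree (n : nat) (w w' : config) : Prop :=
  forall m : Z, (- Z.of_nat n <= m <= Z.of_nat n)%Z -> w m = w' m.

Variable Om : cset.

Definition closed_set : Prop :=
  forall w, (forall n, exists w', Om w' /\ agree n w w') -> Om w.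

Definition shift_invariant : Prop :=
  forall w, Om w -> Om (shiftn 1 w) /\ Om (shiftn (-1) w).

Definition orbits_dense : Prop :=
  forall w w', Om w -> Om w' -> forall n, exists k : Z, agree n (shiftn k w) w'.

Definition minimal_subshift : Prop :=
  (exists w, Om w) /\ closed_set /\ shift_invariant /\ orbits_dense.

Definition occurs (u : seq A) : Prop :=
  exists w, Om w /\ exists j : Z,
    u = [seq w (j + Z.of_nat k)%Z | k <- iota 0 (size u)].
Definition Lang (m : nat) (u : seq A) : Prop := size u = m /\ occurs u.

Definition cyl (u v : seq A) : cset := fun w =>
  Om w /\
  u = [seq w (Z.of_nat k - Z.of_nat (size u))%Z | k <- iota 0 (size u)] /\
  v = [seq w (Z.of_nat k) | k <- iota 0 (size v)].

(* (v, i) = T^i [.v] *)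
Definition vcyl (v : seq A) (i : Z) : cset := shiftset i (cyl [::] v).

Definition open_in (U : cset) : Prop :=
  (forall w, U w -> Om w) /\
  forall w, U w -> exists n, forall w', Om w' -> agree n w w' -> U w'.
Definition closed_in (U : cset) : Prop :=
  forall w, Om w -> ~ U w -> exists n, forall w', Om w' -> agree n w w' -> ~ U w'.
Definition clopen_in (U : cset) : Prop := open_in U /\ closed_in U.

Definition clopen_partition (U : cset) (C : seq cset) : Prop :=
  (forall D, List.In D C -> clopen_in D /\ exists w, D w) /\
  (forall i j, (i < j)%N -> (j < size C)%N ->
     disj (nth (fun _ => False) C i) (nth (fun _ => False) C j)) /\
  (forall w, U w <-> exists2 D, List.In D C & D w).

End SubshiftDefs.

(* Group elements: a homeomorphism together with its inverse.
   Product is composition: (emul r s) x = r (s x). *)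
Record elt (A : finType) := Elt { fw : config A -> config A; bw : config A -> config A }.

Definition eone (A : finType) : elt A := Elt id id.
Definition emul (A : finType) (r s : elt A) : elt A :=
  Elt (fw r \o fw s) (bw s \o bw r).
Definition einv (A : finType) (r : elt A) : elt A := Elt (bw r) (fw r).

Definition star (A : finType) (r s : elt A) : elt A :=
  emul s (emul (einv r) (emul (einv s) r)).

Definition prodE (A : finType) (l : seq (elt A)) : elt A := foldr (@emul A) (eone A) l.

Definition eq_on (A : finType) (Om : cset A) (r s : elt A) : Prop :=
  forall w, Om w -> fw r w = fw s w.

Definition sigma (A : finType) (U : cset A) : elt A :=
  Elt (fun w =>
         if excluded_middle_informative (U w \/ shiftset 1 U w) then shiftn 1 w
         else if excluded_middle_informative (shiftset 2 U w) then shiftn (-2) w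
         else w)
      (fun w =>
         if excluded_middle_informative (shiftset 1 U w \/ shiftset 2 U w)
         then shiftn (-1) w
         else if excluded_middle_informative (U w) then shiftn 2 w
         else w).

From Stdlib Require Import ZArith FunctionalExtensionality ClassicalDescription.
From mathcomp Require Import all_boot zify.
Set Implicit Arguments. Unset Strict Implicit. Unset Printing Implicit Defensive.

(* On the T-orbit of a point, sigma_U acts as the product of the 3-cycles
   (j, j+1, j+2) over the times j at which the orbit visits U ([rot3] below,
   for the visit pattern [u]).  When U, TU, T^2 U are pairwise disjoint the
   visits are at least 3 apart, so these 3-cycles are disjoint; disjoint
   3-cycles commute and multiply to the pattern of the union, which gives (2).
   The 3-cycles r = (j, j+1, j+2) and s = (j+2, j+3, j+4), sharing one point,
   satisfy r * s = (j+1, j+2, j+3); this assembles cylinders [u|v] one letter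
   at a time and gives (3) and (4).  The hypothesis that no word of length 5
   repeats a letter supplies the required spacing of visits to cylinders, and
   gives (1) directly. *)

Section ThreeCycles.
Local Open Scope Z_scope.
Implicit Types u v : Z -> bool.

Definition rot3 u (p : Z) : Z :=
  if u p || u (p - 1) then p + 1 else if u (p - 2) then p - 2 else p.

Definition rot3V u (p : Z) : Z :=
  if u (p - 1) || u (p - 2) then p - 1 else if u p then p + 2 else p.

Definition sparse u : Prop := forall i j, u i -> u j -> i <> j -> 3 <= Z.abs (i - j).

Definition linked u v : Prop := forall i j, u i -> v j -> j - i <> 2 -> 3 <= Z.abs (j - i).

Definition apart u v : Prop := forall i j, u i -> v j -> 3 <= Z.abs (i - j).

Lemma rot3_ext u v p : u =1 v -> rot3 u p = rot3 v p.
Proof. by move=> e; rewrite /rot3 !e. Qed.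

Lemma rot3V_ext u v p : u =1 v -> rot3V u p = rot3V v p.
Proof. by move=> e; rewrite /rot3V !e. Qed.

Ltac refute_spacing :=
  exfalso;
  match goal with
  | H : sparse ?u, H1 : ?u ?a = true, H2 : ?u ?b = true |- _ =>
      apply: (H a b H1 H2 ltac:(discriminate)); reflexivity
  | H : linked ?u ?v, H1 : ?u ?a = true, H2 : ?v ?b = true |- _ =>
      apply: (H a b H1 H2 ltac:(discriminate)); reflexivity
  | H : apart ?u ?v, H1 : ?u ?a = true, H2 : ?v ?b = true |- _ =>
      apply: (H a b H1 H2); reflexivity
  end.

(* Case analysis on the values of [u] and [v] at the finitely many positions
   the composite can reach; the spacing hypotheses, evaluated at concrete
   positions, rule out every case where the two sides differ. *)
Ltac rot3_cases u v :=
  rewrite /rot3 /rot3V; simpl;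
  repeat first
    [ reflexivity | solve [refute_spacing]
    | match goal with
      | |- context [u ?j] =>
          lazymatch j with context [u _] => fail | context [v _] => fail | _ =>
            let H := fresh in destruct (u j) eqn:H; simpl end
      | |- context [v ?j] =>
          lazymatch j with context [u _] => fail | context [v _] => fail | _ =>
            let H := fresh in destruct (v j) eqn:H; simpl end
      end ].

Lemma rot3_commutator u v : sparse u -> sparse v -> linked u v ->
  rot3 v (rot3V u (rot3V v (rot3 u 0))) = rot3 (fun j => u (j - 1) && v (j + 1)) 0 /\
  rot3V u (rot3 v (rot3 u (rot3V v 0))) = rot3V (fun j => u (j - 1) && v (j + 1)) 0.
Proof. by move=> su sv luv; split; rot3_cases u v. Qed.

Lemma rot3_apart u v : sparse u -> sparse v -> apart u v ->
  rot3 v (rot3 u 0) = rot3 (fun j => u j || v j) 0.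
Proof. by move=> su sv auv; rot3_cases u v. Qed.

End ThreeCycles.

Lemma map_iota_eq (T : Type) (f h : nat -> T) lo n :
  [seq f k | k <- iota lo n] = [seq h k | k <- iota 0 n] <->
  forall k, (k < n)%N -> f (lo + k)%N = h k.
Proof.
rewrite -{1}(addn0 lo) iotaDl -map_comp -eq_in_map.
by split=> e k; [move=> k_n; apply: e; rewrite mem_iota | rewrite mem_iota => /e].
Qed.

Lemma In_enum (T : finType) (t : T) : List.In t (enum T).
Proof.
have : t \in enum T by rewrite mem_enum.
elim: (enum T) => [|x s IH] //; rewrite in_cons => /orP [/eqP ->|/IH]; by [left | right].
Qed.

Lemma In_nth_index (T : Type) (d : T) (s : seq T) x :
  List.In x s -> exists2 k, (k < size s)%N & nth d s k = x.
Proof.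
elim: s => [|y s IH] //= [->|/IH [k ks <-]]; first by exists 0%N.
by exists k.+1.
Qed.

Section Orbits.
Variable A : finType.
Implicit Types (U V W X : cset A) (w z : config A) (r s : elt A).

Lemma shiftnD a b w : shiftn a (shiftn b w) = shiftn (b + a) w.
Proof. by apply: functional_extensionality => m; rewrite /shiftn; congr (w _); lia. Qed.

Lemma shiftn0 w : shiftn 0 w = w.
Proof. by apply: functional_extensionality => m; rewrite /shiftn Z.add_0_r. Qed.

Definition visit U w (j : Z) : bool :=
  if excluded_middle_informative (U (shiftn j w)) then true else false.

Lemma visitP U w j : reflect (U (shiftn j w)) (visit U w j).
Proof. by rewrite /visit; case: excluded_middle_informative => h; constructor. Qed.

Lemma visit_sub U V w j : (forall z, U z -> V z) -> visit U w j -> visit V w j.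
Proof. by move=> UV /visitP /UV /visitP. Qed.

Lemma visit_sparse_sub U X w :
  (forall z, U z -> X z) -> sparse (visit X w) -> sparse (visit U w).
Proof. by move=> UX sX i j /(visit_sub UX) Xi /(visit_sub UX) Xj; apply: sX. Qed.

Lemma visit_or U V X w j : (forall z, X z <-> U z \/ V z) ->
  visit X w j = visit U w j || visit V w j.
Proof.
move=> e; move: (e (shiftn j w)).
by case: (visitP X w j); case: (visitP U w j); case: (visitP V w j) => /=; tauto.
Qed.

Lemma shiftset_shiftn k U w j : shiftset k U (shiftn j w) = U (shiftn (j - k) w).
Proof. by rewrite /shiftset shiftnD. Qed.

Lemma fw_sigma_shiftn U w p :
  fw (sigma U) (shiftn p w) = shiftn (rot3 (visit U w) p) w.
Proof.
rewrite /sigma /rot3 /= !shiftset_shiftn.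
case: (visitP U w p) => ?; case: (visitP U w (p - 1)) => ?; case: (visitP U w (p - 2)) => ?;
  repeat case: excluded_middle_informative => /=; rewrite ?shiftnD //; tauto.
Qed.

Lemma bw_sigma_shiftn U w p :
  bw (sigma U) (shiftn p w) = shiftn (rot3V (visit U w) p) w.
Proof.
rewrite /sigma /rot3V /= !shiftset_shiftn.
case: (visitP U w p) => ?; case: (visitP U w (p - 1)) => ?; case: (visitP U w (p - 2)) => ?;
  repeat case: excluded_middle_informative => /=; rewrite ?shiftnD //; tauto.
Qed.

Lemma visit_sparse U w :
  disj U (shiftset 1 U) -> disj U (shiftset 2 U) -> sparse (visit U w).
Proof.
move=> U1 U2 i j /visitP Ui /visitP Uj ij; apply/Z.nlt_ge => near.
wlog lt_ij : i j Ui Uj near {ij} / (i < j)%Z.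
  move=> gen; have [lt|lt] : (i < j \/ j < i)%Z by lia.
  - exact: (gen i j Ui Uj near lt).
  - by apply: (gen j i Uj Ui); lia.
move: Uj; have [-> | ->] : (j = i + 1 \/ j = i + 2)%Z by lia.
- by move=> Uj; apply: (U1 (shiftn (i + 1) w)); rewrite shiftset_shiftn Z.add_simpl_r.
- by move=> Uj; apply: (U2 (shiftn (i + 2) w)); rewrite shiftset_shiftn Z.add_simpl_r.
Qed.

Lemma fw_emul r s w : fw (emul r s) w = fw r (fw s w).
Proof. by []. Qed.

Lemma fw_star r s w : fw (star r s) w = fw s (bw r (bw s (fw r w))).
Proof. by []. Qed.

Lemma bw_star r s w : bw (star r s) w = bw r (fw s (fw r (bw s w))).
Proof. by []. Qed.

Lemma fw_sigma_disjoint_union V W X w :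
  (forall z, X z <-> W z \/ V z) -> disj V W -> sparse (visit X w) ->
  fw (emul (sigma V) (sigma W)) w = fw (sigma X) w.
Proof.
move=> eX VW sX.
rewrite -(shiftn0 w) fw_emul !fw_sigma_shiftn (rot3_ext _ (fun j => visit_or w j eX)).
congr (shiftn _ w); apply: rot3_apart; [apply: visit_sparse_sub sX => z; rewrite eX; tauto.. |].
move=> i j Wi Vj; case: (Z.eq_dec i j) => [ij|ij].
  by subst j; case: (VW (shiftn i w)); split; apply/visitP.
apply: sX ij.
  by rewrite (visit_or w i eX) Wi.
by rewrite (visit_or w j eX) Vj orbT.
Qed.

Definition pairwise_disj (C : seq (cset A)) : Prop :=
  forall i j, (i < j)%N -> (j < size C)%N ->
    disj (nth (fun _ => False) C i) (nth (fun _ => False) C j).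

Lemma sigma_partition C X w :
  pairwise_disj C -> (forall z, X z <-> exists2 D, List.In D C & D z) ->
  sparse (visit X w) -> fw (prodE [seq sigma D | D <- C]) w = fw (sigma X) w.
Proof.
elim: C X => [|D C IH] X dC eX sX.
  have noX j : visit X w j = false by apply/negbTE/negP => /visitP /eX [].
  by rewrite -[in RHS](shiftn0 w) fw_sigma_shiftn /rot3 !noX shiftn0.
pose Y : cset A := fun z => exists2 D', List.In D' C & D' z.
have eXY z : X z <-> Y z \/ D z.
  rewrite eX; split; first by case=> D' [<-|?] ?; [right | left; exists D'].
  by case=> [[D' ? ?]|?]; [exists D'; first right | exists D; first left].
have sY : sparse (visit Y w) by apply: visit_sparse_sub sX => z; rewrite eXY; left.
have dY : pairwise_disj C by move=> i j ij jC; apply: (dC i.+1 j.+1).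
rewrite -(fw_sigma_disjoint_union eXY) //; first by rewrite fw_emul -(IH Y).
move=> z [Dz [D' /(In_nth_index (fun _ => False)) [k kC <-] D'z]].
exact: (dC 0%N k.+1 isT kC z).
Qed.

Lemma pairwise_disj_In C D D' :
  pairwise_disj C -> List.In D C -> List.In D' C -> D = D' \/ disj D D'.
Proof.
move=> dC /(In_nth_index (fun _ => False)) [i iC <-] /(In_nth_index (fun _ => False)) [j jC <-].
case: (ltngtP i j) => [ij|ji|->]; [right; exact: dC | right | by left].
by move=> z [? ?]; apply: (dC j i ji iC z).
Qed.

Lemma pairwise_disj_map (I : eqType) (F : I -> cset A) (s : seq I) :
  uniq s -> (forall i j, i <> j -> disj (F i) (F j)) -> pairwise_disj [seq F i | i <- s].
Proof.
case: s => [|x0 s] us dF i j ij //; rewrite size_map => js.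
rewrite !(nth_map x0) ?(ltn_trans ij) //; apply: dF => /eqP.
by rewrite nth_uniq ?(ltn_trans ij) // => /eqP eij; move: ij; rewrite eij ltnn.
Qed.

Lemma sigma_disj_commute U D D' w :
  disj U (shiftset 1 U) -> disj U (shiftset 2 U) ->
  (forall z, D z -> U z) -> (forall z, D' z -> U z) -> disj D D' ->
  fw (emul (sigma D) (sigma D')) w = fw (emul (sigma D') (sigma D)) w.
Proof.
move=> U1 U2 DU D'U dD.
pose X : cset A := fun z => D z \/ D' z.
have sX : sparse (visit X w).
  by apply: visit_sparse_sub (visit_sparse (w := w) U1 U2) => z [/DU|/D'U].
have eX1 z : X z <-> D' z \/ D z by rewrite /X; tauto.
have eX2 z : X z <-> D z \/ D' z by [].
have dD' : disj D' D by move=> z [? ?]; apply: (dD z).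
by rewrite (fw_sigma_disjoint_union eX1) // (fw_sigma_disjoint_union eX2).
Qed.

End Orbits.

Section Subshift.
Variables (A : finType) (Om : cset A).
Hypothesis shiftOm : shift_invariant Om.
Hypothesis distinct5 : forall u : seq A, Lang Om 5 u -> uniq u.
Implicit Types (U V W : cset A) (w z : config A) (r s : elt A).

Definition eq_hom r s : Prop := forall w, Om w -> fw r w = fw s w /\ bw r w = bw s w.

Definition stable r : Prop := forall w, Om w -> Om (fw r w) /\ Om (bw r w).

Lemma eq_hom_sym r s : eq_hom r s -> eq_hom s r.
Proof. by move=> rs w /rs [-> ->]. Qed.

Lemma eq_hom_trans s r t : eq_hom r s -> eq_hom s t -> eq_hom r t.
Proof. by move=> rs st w Ow; case: (rs w Ow) => -> ->; apply: st. Qed.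

Lemma eq_on_eq_hom r s : eq_hom r s -> eq_on Om r s.
Proof. by move=> rs w /rs []. Qed.

Lemma Om_shiftn k w : Om w -> Om (shiftn k w).
Proof.
move=> Ow; elim/Z.peano_ind: k => [|k IH|k IH]; first by rewrite shiftn0.
- by rewrite -Z.add_1_r -shiftnD; case: (shiftOm IH).
- by rewrite -Z.sub_1_r -shiftnD; case: (shiftOm IH).
Qed.

Lemma stable_sigma U : stable (sigma U).
Proof.
by move=> w Ow; rewrite -(shiftn0 w) fw_sigma_shiftn bw_sigma_shiftn; split; apply: Om_shiftn.
Qed.

Lemma sigma_ext U U' : (forall z, Om z -> U z <-> U' z) -> eq_hom (sigma U) (sigma U').
Proof.
move=> UU' w Ow.
have e : visit U w =1 visit U' w.
  by move=> j; apply/visitP/visitP; rewrite UU' //; apply: Om_shiftn.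
by rewrite -(shiftn0 w) !fw_sigma_shiftn !bw_sigma_shiftn (rot3_ext _ e) (rot3V_ext _ e).
Qed.

Lemma eq_hom_star r s r' s' : stable r' -> stable s' ->
  eq_hom r r' -> eq_hom s s' -> eq_hom (star r s) (star r' s').
Proof.
move=> str' sts' rr' ss' w Ow; rewrite !fw_star !bw_star; split.
- have [O1 _] := str' w Ow; have [_ O2] := sts' _ O1; have [_ O3] := str' _ O2.
  by rewrite (rr' w Ow).1 (ss' _ O1).2 (rr' _ O2).2 (ss' _ O3).1.
- have [_ O1] := sts' w Ow; have [O2 _] := str' _ O1; have [O3 _] := sts' _ O2.
  by rewrite (ss' w Ow).2 (rr' _ O1).1 (ss' _ O2).1 (rr' _ O3).2.
Qed.

Lemma Om_letters_neq x i j : Om x -> i <> j -> (Z.abs (i - j) <= 4)%Z -> x i <> x j.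
Proof.
move=> Ox; wlog lt_ij : i j / (i < j)%Z.
  move=> gen ij d; have [lt|lt] : (i < j \/ j < i)%Z by lia.
  - exact: gen.
  - by move/esym; apply: gen; lia.
move=> _ d e.
pose s := [seq x (i + Z.of_nat k)%Z | k <- iota 0 5].
have us : uniq s by apply: distinct5; split; [|exists x; split; last exists i].
pose k := Z.to_nat (j - i).
have k5 : (k < 5)%N by rewrite /k; lia.
have := nth_uniq (x i) (isT : (0 < size s)%N) (k5 : (k < size s)%N) us.
rewrite !(nth_map 0%N) ?size_iota // !nth_iota // !add0n.
have -> : (i + Z.of_nat k)%Z = j by rewrite /k; lia.
by rewrite Z.add_0_r e eqxx => /esym/eqP; rewrite /k; lia.
Qed.

Lemma visit_sparse_pinned U p a w :
  (forall z, U z -> Om z /\ z p = a) -> sparse (visit U w).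
Proof.
move=> pU i j /visitP /pU [Oi ei] /visitP /pU [_ ej] ij.
apply/Z.nlt_ge => near; apply: (Om_letters_neq Oi (i := p) (j := (p + j - i)%Z)); try lia.
by rewrite ei -ej /shiftn; congr (w _); lia.
Qed.

Lemma visit_linked_pinned U V b w :
  (forall z, U z -> Om z /\ z 1%Z = b) -> (forall z, V z -> Om z /\ z (-1)%Z = b) ->
  linked (visit U w) (visit V w).
Proof.
move=> pU pV i j /visitP /pU [Oi ei] /visitP /pV [_ ej] ij.
apply/Z.nlt_ge => near; apply: (Om_letters_neq Oi (i := 1%Z) (j := (j - 1 - i)%Z)); try lia.
by rewrite ei -ej /shiftn; congr (w _); lia.
Qed.

(* [sigma U] and [sigma V] act on each orbit by 3-cycles (j, j+1, j+2) meeting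
   only in the pinned letter [b], and their commutator is the 3-cycle
   (j+1, j+2, j+3) centred on it. *)
Lemma sigma_star U V W b :
  (forall z, U z -> Om z /\ z 1%Z = b) -> (forall z, V z -> Om z /\ z (-1)%Z = b) ->
  (forall z, Om z -> W z <-> U (shiftn (-1) z) /\ V (shiftn 1 z)) ->
  eq_hom (star (sigma U) (sigma V)) (sigma W).
Proof.
move=> pU pV eW w Ow.
have eUV : visit W w =1 (fun j => visit U w (j - 1) && visit V w (j + 1)).
  move=> j; have := eW _ (Om_shiftn j Ow); rewrite !shiftnD.
  by case: (visitP W w j); case: (visitP U w (j - 1)); case: (visitP V w (j + 1)) => /=; tauto.
have [efw ebw] := rot3_commutator (visit_sparse_pinned (w := w) pU) (visit_sparse_pinned (w := w) pV)
  (visit_linked_pinned (w := w) pU pV).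
rewrite -(shiftn0 w) fw_star bw_star !(fw_sigma_shiftn, bw_sigma_shiftn).
by rewrite (rot3_ext _ eUV) (rot3V_ext _ eUV) efw ebw.
Qed.

(* Reads [g lo ... g (hi - 1)] with [g k] at coordinate [k - p], so the dot of
   a cylinder [u|v] sits just before [g p]. *)
Definition window (g : nat -> A) (lo hi : nat) (p : Z) : cset A :=
  fun z => Om z /\ forall k, (lo <= k < hi)%N -> z (Z.of_nat k - p)%Z = g k.

Lemma cyl_window u v g lo hi p :
  u ++ v = [seq g k | k <- iota lo (size u + size v)] ->
  hi = (lo + size u + size v)%N -> p = Z.of_nat (lo + size u) ->
  forall z, cyl Om u v z <-> window g lo hi p z.
Proof.
move=> euv -> -> z.
move: euv; rewrite iotaD map_cat => /eqP; rewrite eqseq_cat ?size_map ?size_iota //.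
case/andP => /eqP eu /eqP ev; rewrite /cyl /window.
have -> : u = [seq z (Z.of_nat k - Z.of_nat (size u))%Z | k <- iota 0 (size u)] <->
    forall k, (k < size u)%N -> g (lo + k)%N = z (Z.of_nat k - Z.of_nat (size u))%Z.
  by rewrite {1}eu map_iota_eq.
have -> : v = [seq z (Z.of_nat k) | k <- iota 0 (size v)] <->
    forall k, (k < size v)%N -> g (lo + size u + k)%N = z (Z.of_nat k).
  by rewrite {1}ev map_iota_eq.
split=> -[Oz wz]; split=> //.
- move=> k /andP [lo_k k_hi]; case: (ltnP k (lo + size u)) => k_u.
  + have := (wz.1 (k - lo)%N ltac:(lia)); rewrite subnKC // => ->; congr (z _); lia.
  + have := (wz.2 (k - (lo + size u))%N ltac:(lia)); rewrite subnKC // => ->; congr (z _); lia.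
- split=> k k_lt; rewrite -wz; by [congr (z _); lia | lia].
Qed.

Lemma window_split g lo hi h1 l2 h2 p :
  (forall k, (lo <= k < hi)%N <-> (lo <= k < h1)%N \/ (l2 <= k < h2)%N) ->
  forall z, Om z -> window g lo hi (p + 1) z <->
    window g lo h1 p (shiftn (-1) z) /\ window g l2 h2 (p + 2) (shiftn 1 z).
Proof.
move=> cover z Oz; rewrite /window /shiftn; split.
- case=> _ wz; split; (split; first exact: Om_shiftn) => k k_in;
    rewrite -wz; by [congr (z _); lia | apply/cover; tauto].
- case=> -[_ w1] [_ w2]; split=> // k /cover [k_in|k_in];
    [rewrite -(w1 k k_in) | rewrite -(w2 k k_in)]; congr (z _); lia.
Qed.

Lemma sigma_star_window g lo hi h1 l2 h2 m p :
  (forall k, (lo <= k < hi)%N <-> (lo <= k < h1)%N \/ (l2 <= k < h2)%N) ->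
  (lo <= m < h1)%N -> (l2 <= m < h2)%N -> Z.of_nat m = (p + 1)%Z ->
  eq_hom (star (sigma (window g lo h1 p)) (sigma (window g l2 h2 (p + 2))))
         (sigma (window g lo hi (p + 1))).
Proof.
move=> cover m1 m2 mp; apply: (sigma_star (b := g m)).
- by move=> z [Oz wz]; split=> //; rewrite -(wz m m1); congr (z _); lia.
- by move=> z [Oz wz]; split=> //; rewrite -(wz m m2); congr (z _); lia.
- by move=> z Oz; apply: window_split.
Qed.

Lemma vcyl_disj v a b : v <> [::] -> (0 < b - a <= 2)%Z -> disj (vcyl Om v a) (vcyl Om v b).
Proof.
case: v => [|c v] // _ ab z [].
rewrite /vcyl /shiftset /cyl => -[Oa [_ /= [ca _]]] [_ [_ /= [cb _]]].
apply: (Om_letters_neq Oa (i := 0%Z) (j := (a - b)%Z)); try lia.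
by rewrite -ca cb /shiftn; congr (z _); lia.
Qed.

Lemma sigma_split_pinned (T : finType) (F : T -> cset A) X p a :
  (forall z, X z -> Om z /\ z p = a) -> (forall t t', t <> t' -> disj (F t) (F t')) ->
  (forall z, X z <-> exists t, F t z) ->
  eq_on Om (sigma X) (prodE [seq sigma (F t) | t <- enum T]).
Proof.
move=> pX dF eX w _; rewrite (map_comp (@sigma A) F).
symmetry; apply: (sigma_partition (pairwise_disj_map (enum_uniq T) dF)).
  move=> z; rewrite eX; split=> [[t Ft]|[D /List.in_map_iff [t [<- _]] Ft]]; last by exists t.
  by exists (F t) => //; apply: List.in_map; apply: In_enum.
exact: visit_sparse_pinned pX.
Qed.

Lemma sigma_letter_split a :
  eq_on Om (sigma (cyl Om [:: a] [::]))
    (prodE [seq sigma (cyl Om [:: a] [:: bc.1; bc.2]) | bc <- enum {: A * A}]).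
Proof.
apply: (sigma_split_pinned (p := (-1)%Z) (a := a)); rewrite /cyl /=.
- by move=> z [Oz [[<-] _]].
- move=> [b c] [b' c'] bc z [[_ [_ [eb ec]]] [_ [_ [eb' ec']]]].
  by apply: bc; rewrite eb ec eb' ec'.
- move=> z; split=> [[Oz [ea _]]|[bc [Oz [ea _]]]]; last by [].
  by exists (z 0%Z, z 1%Z).
Qed.

Lemma sigma_pair_split b c :
  eq_on Om (sigma (cyl Om [::] [:: b; c]))
    (prodE [seq sigma (cyl Om [:: a] [:: b; c]) | a <- enum A]).
Proof.
apply: (sigma_split_pinned (p := 0%Z) (a := b)); rewrite /cyl /=.
- by move=> z [Oz [_ [<-]]].
- by move=> a a' aa' z [[_ [[ea] _]] [_ [[ea'] _]]]; apply: aa'; rewrite ea ea'.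
- move=> z; split=> [[Oz [_ ebc]]|[a [Oz [_ ebc]]]]; last by [].
  by exists (z (-1)%Z).
Qed.

Lemma sigma_cyl_commutator_chain (w : seq A) (a0 : A) : (4 <= size w)%N ->
  let n := size w in
  let wi := nth a0 w in
  eq_on Om (sigma (cyl Om [:: wi 0] (drop 1 w)))
    (foldr (fun j acc => star (sigma (cyl Om [::] [:: wi j; wi j.+1])) acc)
       (sigma (cyl Om [:: wi (n - 3)] [:: wi (n - 2); wi (n - 1)]))
       (iota 0 (n - 3))).
Proof.
move=> n4 n wi; set F := fun j acc => _; set base := sigma (cyl Om [:: wi (n - 3)] _).
have chain m j : (j + m + 3)%N = n ->
    eq_hom (foldr F base (iota j m)) (sigma (window wi j n (Z.of_nat j + 1))).
  elim: m j => [|m IH] j jm.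
    apply: sigma_ext => z _; apply: cyl_window => /=; [|lia..].
    by have [-> -> ->] : [/\ (n - 3 = j)%N, (n - 2 = j.+1)%N & (n - 1 = j.+2)%N] by split; lia.
  have IHj := IH j.+1 ltac:(lia).
  rewrite (_ : (Z.of_nat j.+1 + 1 = Z.of_nat j + 2)%Z) in IHj; last lia.
  apply: (eq_hom_trans _ (sigma_star_window wi (lo := j) (h1 := j.+2) (l2 := j.+1) (h2 := n)
                             (m := j.+1) (p := Z.of_nat j) _ _ _ _)); try lia.
  apply: (eq_hom_star (stable_sigma _) (stable_sigma _) _ IHj).
  by apply: sigma_ext => z _; apply: cyl_window => //=; lia.
apply: eq_on_eq_hom; apply: (eq_hom_trans _ (eq_hom_sym (chain (n - 3)%N 0%N _))); last lia.
apply: sigma_ext => z _; apply: cyl_window; rewrite //= ?size_drop /n; try lia.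
by rewrite add0n (map_nth_iota a0) // -size_drop take_size.
Qed.

Lemma sigma_cyl_letter_chain (w : seq A) (a0 : A) (k : nat) :
  (4 <= size w)%N -> (2 <= k)%N -> (k <= size w - 1)%N ->
  let wi := nth a0 w in
  eq_on Om (sigma (cyl Om (take k w) (drop k w)))
    (foldl (fun acc j => star acc (sigma (cyl Om [:: wi j] [::])))
       (sigma (cyl Om [:: wi 0] (drop 1 w)))
       (iota 2 (k - 1))).
Proof.
move=> n4 k2 kn wi; set G := fun acc j => _; set base := sigma (cyl Om [:: wi 0] _).
pose n := size w.
have cut l z : (l <= n)%N -> cyl Om (take l w) (drop l w) z <-> window wi 0 n (Z.of_nat l) z.
  move=> ln; apply: cyl_window; rewrite ?size_takel ?size_drop ?add0n ?subnKC //.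
  by rewrite cat_take_drop (map_nth_iota0 a0) // take_size.
have chain m : (m + 2 <= n)%N ->
    eq_hom (foldl G base (iota 2 m)) (sigma (window wi 0 n (Z.of_nat m + 1))).
  elim: m => [|m IH] mn.
    by apply: sigma_ext => z _; rewrite -(cut 1%N) ?(take_nth a0) ?take0 //; lia.
  have -> : iota 2 m.+1 = iota 2 m ++ [:: m.+2] by rewrite -[X in iota 2 X]addn1 iotaD add2n.
  rewrite foldl_cat (_ : (Z.of_nat m.+1 + 1 = Z.of_nat m + 1 + 1)%Z); last lia.
  apply: (eq_hom_trans _ (sigma_star_window wi (lo := 0) (h1 := n) (l2 := m.+2) (h2 := m.+3)
                             (m := m.+2) (p := (Z.of_nat m + 1)%Z) _ _ _ _)); try lia.
  apply: (eq_hom_star (stable_sigma _) (stable_sigma _) (IH _) _); first lia.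
  by apply: sigma_ext => z _; apply: cyl_window => //=; lia.
apply: eq_on_eq_hom; apply: (eq_hom_trans _ (eq_hom_sym (chain (k - 1)%N _))); last lia.
have -> : (Z.of_nat (k - 1) + 1 = Z.of_nat k)%Z by lia.
by apply: sigma_ext => z _; apply: cut; lia.
Qed.

End Subshift.

Theorem proposition3p5 (A : finType) (Om : cset A) :
  minimal_subshift Om ->
  (forall u : seq A, Lang Om 5 u -> uniq u) ->
  (* (1) *)
  (forall (v : seq A) (i : Z), v <> [::] -> occurs Om v ->
     disj (vcyl Om v i) (vcyl Om v (i + 1)%Z) /\
     disj (vcyl Om v i) (vcyl Om v (i + 2)%Z) /\
     disj (vcyl Om v (i + 1)%Z) (vcyl Om v (i + 2)%Z)) /\
  (* (2) *)
  (forall U : cset A, clopen_in Om U ->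
     disj U (shiftset 1 U) -> disj U (shiftset 2 U) ->
     disj (shiftset 1 U) (shiftset 2 U) ->
     forall C : seq (cset A), clopen_partition Om U C ->
       eq_on Om (sigma U) (prodE [seq sigma D | D <- C]) /\
       (forall D D', List.In D C -> List.In D' C ->
          eq_on Om (emul (sigma D) (sigma D')) (emul (sigma D') (sigma D)))) /\
  (forall a : A,
     eq_on Om (sigma (cyl Om [:: a] [::]))
       (prodE [seq sigma (cyl Om [:: a] [:: bc.1; bc.2]) | bc <- enum {: A * A}])) /\
  (forall b c : A,
     eq_on Om (sigma (cyl Om [::] [:: b; c]))
       (prodE [seq sigma (cyl Om [:: a] [:: b; c]) | a <- enum A])) /\
  (* (3) *)
  (forall (w : seq A) (a0 : A), (4 <= size w)%N ->
     let n := size w in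
     let wi := nth a0 w in
     eq_on Om (sigma (cyl Om [:: wi 0] (drop 1 w)))
       (foldr (fun j acc => star (sigma (cyl Om [::] [:: wi j; wi j.+1])) acc)
          (sigma (cyl Om [:: wi (n - 3)] [:: wi (n - 2); wi (n - 1)]))
          (iota 0 (n - 3)))) /\
  (* (4) *)
  (forall (w : seq A) (a0 : A) (k : nat), (4 <= size w)%N ->
     (2 <= k)%N -> (k <= size w - 1)%N ->
     let wi := nth a0 w in
     eq_on Om (sigma (cyl Om (take k w) (drop k w)))
       (foldl (fun acc j => star acc (sigma (cyl Om [:: wi j] [::])))
          (sigma (cyl Om [:: wi 0] (drop 1 w)))
          (iota 2 (k - 1)))).
Proof.
move=> [_ [_ [shiftOm _]]] distinct5.
split.
  by move=> v i v0 _; split; [|split]; apply: vcyl_disj => //; lia.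
split.
  move=> U _ U1 U2 _ C [_ [dC eC]]; split.
    by move=> w _; rewrite (sigma_partition dC eC (visit_sparse (w := w) U1 U2)).
  move=> D D' DC D'C w _; case: (pairwise_disj_In dC DC D'C) => [-> // | dD].
  by apply: (sigma_disj_commute w U1 U2) => // z Dz; apply/eC; [exists D | exists D'].
split; first exact: sigma_letter_split.
split; first exact: sigma_pair_split.
split; first exact: sigma_cyl_commutator_chain.
exact: sigma_cyl_letter_chain.
Qed.
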